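(* Let $(a_m)_{m\ge0}$ be defined by $a_0=a_1=1$ and $a_{m+1}=-1+\sum_{p=0}^{m}a_pa_{m-p}$ for $m\ge1$ (OEIS A176677). For any $x,y\in\{0,1\}$, the tree pattern $(P,e)=(12435,10xy)$ satisfies $|\mathcal{T}_n(P,e)|=a_{n+1}$ for all $n\ge0$; i.e., the class $\mathcal{T}_n(12435,10\text{-}\text{-})$ is counted by OEIS A176677.
   Context: $\mathcal{T}_n$ is the set of binary trees on $n$ vertices labeled $1,\dots,n$ by the search tree property; $\mathcal{T}_0=\{\varepsilon\}$. $c_L,c_R,p$: left child, right child, parent. A tree pattern is $(P,e)$, $P\in\mathcal{T}_k$, $e\colon[k]\setminus\{\text{root}\}\to\{0,1\}$ ($e(i)=1$: edge to parent contiguous; $0$: non-contiguous). $T\in\mathcal{T}_n$ contains $(P,e)$ if there is an injection $f\colon[k]\to[n]$ such that for every non-root $i$ of $P$: if $e(i)=1$, $f(i)$ is the left (resp. right) child of $f(p(i))$ when $i$ is the left (resp. right) child of $p(i)$; if $e(i)=0$, $f(i)$ lies in the left (resp. right) subtree of $f(p(i))$. $\mathcal{T}_n(P,e)$ is the set of avoiders. Compact notation: $(\tau_1\cdots\tau_k,\,x_2\cdots x_k)$ denotes the pattern whose preorder vertex sequence (root, then left subtree recursively, then right subtree recursively) is $\tau_1,\dots,\tau_k$ and with $e(\tau_j)=x_j$; thus $(12435,10xy)$ is the tree with root 1, right child 2 of 1, right child 4 of 2, left child 3 and right child 5 of 4, with $e(2)=1$, $e(4)=0$, $e(3)=x$,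 $e(5)=y$. *)

From mathcomp Require Import all_boot all_order all_algebra.
From Stdlib Require Import List.
Set Implicit Arguments. Unset Strict Implicit. Unset Printing Implicit Defensive.

(* A binary tree on n vertices labeled 1..n by the
   search tree property is determined by its shape (labels = in-order
   ranks), so T_n is in bijection with shapes with n nodes.  Vertices are
   identified with their addresses: the root-to-vertex path, a list of
   booleans (false = go to left child, true = go to right child). *)
Inductive bt : Type := Lf | Nd (l r : bt).

Fixpoint bt_size (t : bt) : nat :=
  match t with Lf => 0 | Nd l r => (bt_size l + bt_size r).+1 end.

Fixpoint isnode (t : bt) (p : list bool) : Prop :=
  match t, p with
  | Lf, _ => False
  | Nd _ _, nil => True
  | Nd l r, b :: q => isnode (if b then r else l) q
  end.

(* Tree pattern (P, e): e assigns to each non-root vertex of P (given by its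
   address) 1 (true, contiguous edge) or 0 (false, non-contiguous edge).
   A non-root vertex of P has address q ++ [b]: it is the b-child of q. *)
Definition contains (T P : bt) (e : list bool -> bool) : Prop :=
  exists f : list bool -> list bool,
    (forall i, isnode P i -> isnode T (f i)) /\
    (forall i j, isnode P i -> isnode P j -> f i = f j -> i = j) /\
    (forall q b, isnode P (q ++ b :: nil) ->
       if e (q ++ b :: nil) then f (q ++ b :: nil) = f q ++ b :: nil
       else exists s, f (q ++ b :: nil) = f q ++ b :: s).

Definition avoids (T P : bt) (e : list bool -> bool) : Prop := ~ contains T P e.

(* The pattern tree 12435: root 1, right child 2, right child 4 of 2,
   left child 3 and right child 5 of 4. *)
Definition P12435 : bt := Nd Lf (Nd Lf (Nd (Nd Lf Lf) (Nd Lf Lf))).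

(* Edge labels 10xy: e(2)=1, e(4)=0, e(3)=x, e(5)=y.
   Vertex addresses: 2 = [R], 4 = [R;R], 3 = [R;R;L], 5 = [R;R;R].
   (The value on non-vertices is irrelevant.) *)
Definition e10xy (x y : bool) (i : list bool) : bool :=
  match i with
  | true :: nil => true
  | true :: true :: nil => false
  | true :: true :: false :: nil => x
  | true :: true :: true :: nil => y
  | _ => false
  end.

(* Whatever [x] and [y], a tree contains (12435, 10xy) exactly when some vertex
   with two children has an address containing two consecutive right steps: the
   last two pattern edges can always be realised contiguously by the children of
   that vertex.  Hence a tree avoids the pattern iff its left subtree does and its
   right subtree, if any, has an avoiding left subtree and a right subtree that is
   a path.  For the generating functions A, R, G of avoiders, of such right
   subtrees and of paths this gives A = 1 + zAR, R = 1 + zAG and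
   G = (1 - z)/(1 - 2z); eliminating R and G yields
   A_(n+2) + 1 = 2 A_(n+1) + sum_k A_k A_(n-k), the recurrence of A176677
   shifted by one. *)

From mathcomp Require Import all_boot all_order all_algebra.
From Stdlib Require Import List.
From HB Require Import structures.
From mathcomp Require Import zify.
Import GRing.Theory.
(* [List] shadows the [seq] notations, notably [++]; restore them. *)
Import seq.

Set Implicit Arguments.
Unset Strict Implicit.
Unset Printing Implicit Defensive.

Fixpoint eqbt (t u : bt) : bool :=
  match t, u with
  | Lf, Lf => true
  | Nd l r, Nd l' r' => eqbt l l' && eqbt r r'
  | _, _ => false
  end.

Lemma eqbtP : Equality.axiom eqbt.
Proof.
elim=> [|l IHl r IHr] [|l' r'] /=; try by constructor.
by apply: (iffP andP) => [[/IHl -> /IHr ->] | [<- <-]]; split; [apply/IHl | apply/IHr].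
Qed.

HB.instance Definition _ := hasDecEq.Build bt eqbtP.

Lemma InP (T : eqType) (x : T) (s : seq T) : List.In x s <-> x \in s.
Proof.
elim: s => [|y s IH] //=; rewrite in_cons; split.
  by case=> [->|/IH ->]; rewrite ?eqxx ?orbT.
by case/orP=> [/eqP ->|/IH]; [left|right].
Qed.

Lemma uniq_NoDup (T : eqType) (s : seq T) : uniq s -> List.NoDup s.
Proof.
elim: s => [|y s IH] /=; first by constructor.
by case/andP=> /negP ys us; constructor; [move/InP | exact: IH].
Qed.

Lemma lengthE (A : Type) (s : list A) : List.length s = size s.
Proof. by []. Qed.

Lemma appE (A : Type) (s t : list A) : (s ++ t)%list = s ++ t.
Proof. by []. Qed.

Fixpoint is_path (t : bt) : bool :=
  if t is Nd l r then [&& (l == Lf) || (r == Lf), is_path l & is_path r] else true.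

Fixpoint avoider (t : bt) : bool :=
  if t is Nd l r then
    [&& avoider l, avoider r & if r is Nd _ rr then is_path rr else true]
  else true.

Definition right_admissible (r : bt) : bool :=
  if r is Nd rl rr then avoider rl && is_path rr else true.

Lemma path_avoider t : is_path t -> avoider t.
Proof.
elim: t => [|l IHl r IHr] //= /and3P[_ pl pr].
by rewrite IHl // IHr //; case: r pr {IHr} => //= ? ? /and3P[].
Qed.

Lemma avoider_Nd l r : avoider (Nd l r) = avoider l && right_admissible r.
Proof.
case: r => [|rl rr] /=; first by rewrite !andbT.
case pr: (is_path rr); rewrite ?andbF // !andbT.
rewrite (path_avoider pr); case: rr pr => [|a b] /=; rewrite ?andbT // => /and3P[_ _ ->].
by rewrite !andbT.
Qed.

Lemma isnode_prefix t p q : isnode t (p ++ q) -> isnode t p.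
Proof. by elim: t p => [|l IHl r IHr] [|[] p] //=; [apply: IHr | apply: IHl]. Qed.

Definition full (t : bt) (w : seq bool) : Prop :=
  isnode t (rcons w false) /\ isnode t (rcons w true).

Definition rr_full (t : bt) : Prop := exists u s, full t (u ++ true :: true :: s).

Lemma has_fullP t : reflect (exists w, full t w) (~~ is_path t).
Proof.
elim: t => [|l IHl r IHr]; first by constructor; case=> w [].
apply: (iffP idP) => [|[[|[] w] fw]] /=.
- rewrite !negb_and => /or3P[lr | /IHl[w fw] | /IHr[w fw]].
  + by exists [::]; case: l r lr {IHl IHr} => [|? ?] [|? ?].
  + by exists (false :: w).
  + by exists (true :: w).
- by case: l r fw {IHl IHr} => [|? ?] [|? ?] [].
- suff /IHr/negbTE -> : exists w, full r w by rewrite !andbF.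
  by exists w.
- suff /IHl/negbTE -> : exists w, full l w by rewrite !andbF.
  by exists w.
Qed.

Lemma rr_fullP t : reflect (rr_full t) (~~ avoider t).
Proof.
elim: t => [|l IHl r IHr]; first by constructor; case=> u [s []].
apply: (iffP idP) => [|[[|[] u] [s fs]]] /=.
- rewrite !negb_and => /or3P[/IHl[u [s fs]] | /IHr[u [s fs]] | ].
  + by exists (false :: u), s.
  + by exists (true :: u), s.
  + by case: r {IHr} => // rl rr /has_fullP[w fw]; exists [::], w.
- case: r fs {IHr} => [[] | rl rr fs] //.
  suff /has_fullP/negbTE -> : exists w, full rr w by rewrite !andbF.
  by exists s.
- suff /IHr/negbTE -> : rr_full r by rewrite andbF.
  by exists u, s.
- suff /IHl/negbTE -> : rr_full l by [].
  by exists u, s.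
Qed.

Lemma contains_weaken T P (e e' : seq bool -> bool) :
  (forall i, e i -> e' i) -> contains T P e' -> contains T P e.
Proof.
move=> ee' [f [fnode [finj fedge]]]; exists f; do 2!split=> //.
move=> q b /fedge; have := ee' (q ++ b :: nil).
case: (e _) => [/(_ isT) -> // | _]; case: (e' _) => // ->.
by exists [::].
Qed.

Lemma contains_rr_full T : contains T P12435 (e10xy false false) -> rr_full T.
Proof.
case=> f [fnode [_ fedge]].
move: (fedge [::] true I) (fedge [:: true] true I).
move: (fedge [:: true; true] false I) (fedge [:: true; true] true I).
move=> /= -[sL fL] [sR fR] f1 [s f2]; rewrite !appE in fL fR f1 f2.
exists (f [::]), s.
have <- : f [:: true; true] = f [::] ++ true :: true :: s.
  by rewrite f2 f1 -catA.
split.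
  by move: (fnode [:: true; true; false] I); rewrite fL -cat_rcons => /isnode_prefix.
by move: (fnode [:: true; true; true] I); rewrite fR -cat_rcons => /isnode_prefix.
Qed.

Definition graft (s i : seq bool) : seq bool :=
  if i is true :: true :: t then true :: true :: s ++ t else i.

Lemma graft_inj s : injective (graft s).
Proof.
move=> [|[] [|[] i]] [|[] [|[] j]] //= [/eqP].
by rewrite eqseq_cat // eqxx => /eqP ->.
Qed.

Lemma rr_full_contains T : rr_full T -> contains T P12435 (e10xy true true).
Proof.
case=> u [s [wL wR]].
have w_node : isnode T (u ++ true :: true :: s).
  by move: wL; rewrite -cats1 => /isnode_prefix.
exists (fun i => u ++ graft s i); split; [|split].
- case=> [|[] [|[] [|[] [|[] ?]]]] //= _; rewrite ?cats0 //.
  + exact: isnode_prefix w_node.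
  + by apply: (@isnode_prefix _ _ (true :: s)); rewrite -catA.
  + by rewrite -!cat_cons catA cats1.
  + by rewrite -!cat_cons catA cats1.
- by move=> i j _ _ /eqP; rewrite eqseq_cat // eqxx => /eqP/graft_inj.
- case=> [|[] [|[] [|[] [|[] ?]]]] [] //= _; try exists s.
  all: by rewrite appE ?cats0 -?catA.
Qed.

Lemma avoids_12435 T x y : avoids T P12435 (e10xy x y) <-> avoider T.
Proof.
have lo i : e10xy false false i -> e10xy x y i by case: i => [|[] [|[] [|[] []]]].
have hi i : e10xy x y i -> e10xy true true i by case: i => [|[] [|[] [|[] []]]].
split=> [avT | avT /(contains_weaken lo)/contains_rr_full/rr_fullP]; last by rewrite avT.
by apply/negPn/negP => /rr_fullP/rr_full_contains/(contains_weaken hi).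
Qed.

Definition conv (f g : nat -> nat) (n : nat) : nat := \sum_(k < n.+1) f k * g (n - k).

Definition conv_unit (n : nat) : nat := n == 0.

Lemma conv_unitl g : conv conv_unit g =1 g.
Proof.
by move=> n; rewrite /conv big_ord_recl subn0 mul1n big1 ?addn0.
Qed.

Lemma conv_unitr f : conv f conv_unit =1 f.
Proof.
move=> n; rewrite /conv big_ord_recr /= subnn muln1 big1 ?add0n // => k _.
by rewrite /conv_unit subn_eq0 leqNgt ltn_ord muln0.
Qed.

Lemma eq_conv f1 f2 g1 g2 : f1 =1 f2 -> g1 =1 g2 -> conv f1 g1 =1 conv f2 g2.
Proof. by move=> ef eg n; apply: eq_bigr => k _; rewrite ef eg. Qed.

Definition trees_step (g : nat -> seq bt) (n : nat) : seq bt :=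
  flatten [seq [seq Nd l r | l <- g k, r <- g (n - k)] | k <- iota 0 n.+1].

(* [trees_fuel f n] lists the trees of size [n] as soon as [n < f]. *)
Fixpoint trees_fuel (f n : nat) : seq bt :=
  if f is f'.+1 then (if n is m.+1 then trees_step (trees_fuel f') m else [:: Lf])
  else [::].

Definition trees (n : nat) : seq bt := trees_fuel n.+1 n.

Lemma trees_fuel_stable f1 f2 n :
  n < f1 -> n < f2 -> trees_fuel f1 n = trees_fuel f2 n.
Proof.
elim: f1 f2 n => [|f1 IH] [|f2] [|n] //= lt_n_f1 lt_n_f2.
congr flatten; apply/eq_in_map => k; rewrite mem_iota add0n ltnS => /andP[_ le_kn].
by rewrite (IH f2 k) ?(IH f2 (n - k)) //; lia.
Qed.

Lemma treesS n : trees n.+1 = trees_step trees n.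
Proof.
change (trees_step (trees_fuel n.+1) n = trees_step trees n).
rewrite /trees_step; congr flatten; apply/eq_in_map => k.
rewrite mem_iota add0n ltnS => /andP[_ le_kn].
rewrite /trees (@trees_fuel_stable n.+1 k.+1 k)
  ?(@trees_fuel_stable n.+1 (n - k).+1 (n - k)) //; lia.
Qed.

Definition ntrees (p : pred bt) (n : nat) : nat := count p (trees n).

Lemma ntrees0 p : ntrees p 0 = p Lf.
Proof. by rewrite /ntrees /trees /=; case: (p Lf). Qed.

Lemma count_allpairs_Nd (P p q : pred bt) s1 s2 :
  (forall l r, P (Nd l r) = p l && q r) ->
  count P [seq Nd l r | l <- s1, r <- s2] = count p s1 * count q s2.
Proof.
move=> PE; elim: s1 => [|l s1 IH] //=.
rewrite count_cat IH count_map mulnDl; congr (_ + _).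
case: (p l) (PE l) => PlE /=; rewrite (eq_count PlE) ?count_pred0 //.
by rewrite mul1n.
Qed.

Lemma ntreesS (P p q : pred bt) n :
  (forall l r, P (Nd l r) = p l && q r) ->
  ntrees P n.+1 = conv (ntrees p) (ntrees q) n.
Proof.
move=> PE; rewrite /ntrees treesS /trees_step count_flatten sumnE !big_map.
rewrite /conv -(big_mkord xpredT (fun k => count p (trees k) * count q (trees (n - k)))).
by apply: eq_bigr => k _; rewrite (@count_allpairs_Nd P p q _ _ PE).
Qed.

Lemma ntrees_pred1 t n : ntrees (pred1 t) n = (bt_size t == n).
Proof.
elim: t n => [|l IHl r IHr] [|n]; rewrite ?ntrees0 //.
  rewrite (@ntreesS _ pred0 pred0) // /conv big1 // => k _.
  by rewrite /ntrees count_pred0.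
rewrite (@ntreesS _ (pred1 l) (pred1 r)); last first.
  by move=> l' r' /=; apply/eqP/andP => [[-> ->]|[/eqP -> /eqP ->]].
rewrite /conv /= eqSS.
case: (ltnP (bt_size l) n.+1) => [lt_ln|le_nl].
  rewrite (bigD1 (Ordinal lt_ln)) //= big1 => [|k ne_kl].
    by rewrite IHl IHr eqxx addn0; apply/eqP; case: eqP; lia.
  by rewrite IHl; case: eqP => // l_k; case/eqP: ne_kl; apply/val_inj.
rewrite big1 => [|k _]; first by case: eqP => //; lia.
by rewrite IHl; case: eqP => // l_k; have := ltn_ord k; lia.
Qed.

Lemma mem_trees t n : (t \in trees n) = (bt_size t == n).
Proof. by rewrite -has_pred1 has_count -/(ntrees _ n) ntrees_pred1; case: eqP. Qed.

Lemma trees_uniq n : uniq (trees n).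
Proof. by apply: count_mem_uniq => t; rewrite mem_trees -ntrees_pred1. Qed.

Lemma ntrees_leaf : ntrees (pred1 Lf) =1 conv_unit.
Proof. by move=> n; rewrite ntrees_pred1 eq_sym. Qed.

(* [gf_ratio g u]: the generating functions satisfy [(1 - 2z) g(z) = (1 - z) u(z)]. *)
Definition gf_ratio (g u : nat -> nat) : Prop :=
  g 0 = u 0 /\ forall m, g m.+1 + u m = u m.+1 + 2 * g m.

Lemma eq_gf_ratio g1 g2 u1 u2 :
  g1 =1 g2 -> u1 =1 u2 -> gf_ratio g1 u1 -> gf_ratio g2 u2.
Proof. by move=> eg eu [g0 gS]; split=> [|m]; rewrite -!eg -!eu. Qed.

Lemma gf_ratio_conv f g u : gf_ratio g u -> gf_ratio (conv f g) (conv f u).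
Proof.
case=> g0 gS; split; first by rewrite /conv !big_ord1 g0.
move=> m; rewrite /conv big_ord_recr [in RHS]big_ord_recr /= !subnn g0.
rewrite addnAC -big_split /= [RHS]addnAC; congr (_ + _).
rewrite addnC big_distrr -big_split; apply: eq_bigr => k _ /=.
rewrite (subSn (leq_ord k)) -mulnDr gS; lia.
Qed.

Lemma ntrees_path_ratio : gf_ratio (ntrees is_path) conv_unit.
Proof.
split=> [|n]; first by rewrite ntrees0.
pose left_leaf t := if t is Nd Lf r then is_path r else false.
pose right_leaf t := if t is Nd l Lf then is_path l else false.
have pathE : {in trees n.+1, is_path =1 predU left_leaf right_leaf}.
  move=> t; rewrite mem_trees.
  by case: t => [|[|? ?] [|? ?]] //= _; rewrite ?andbT ?orbF.
have bothE : predI left_leaf right_leaf =1 pred1 (Nd Lf Lf).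
  by case=> [|[|? ?] [|? ?]] //=; rewrite andbF.
have := count_predUI left_leaf right_leaf (trees n.+1).
rewrite -(eq_in_count pathE) (eq_count bothE) -!/(ntrees _ n.+1) ntrees_pred1.
rewrite (@ntreesS left_leaf (pred1 Lf) is_path) => [|[|? ?] r] //.
rewrite (@ntreesS right_leaf is_path (pred1 Lf)) => [|l [|? ?]] /=;
  try by case: (is_path l).
rewrite (eq_conv ntrees_leaf (frefl _)) (eq_conv (frefl _) ntrees_leaf).
by rewrite conv_unitl conv_unitr /conv_unit eqSS eq_sym; lia.
Qed.

Section AvoiderCount.

Local Notation A := (ntrees avoider).
Local Notation G := (ntrees is_path).

Lemma ntrees_avoiderSS n : A n.+2 = A n.+1 + conv A (conv A G) n.
Proof.
rewrite (ntreesS _ avoider_Nd) /conv big_ord_recr /= subnn ntrees0 muln1 addnC.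
congr (_ + _); apply: eq_bigr => k _.
by rewrite (subSn (leq_ord k)) (@ntreesS right_admissible avoider is_path).
Qed.

Lemma ntrees_avoider_rec n : A n.+2 + 1 = 2 * A n.+1 + conv A A n.
Proof.
have AG_ratio : gf_ratio (conv A G) A.
  exact: eq_gf_ratio (frefl _) (conv_unitr A) (gf_ratio_conv A ntrees_path_ratio).
have [S0 SS] := gf_ratio_conv A AG_ratio.
have A1 : A 1 = 1 by [].
elim: n => [|n IH]; first by rewrite ntrees_avoiderSS S0 /conv big_ord1 A1.
have := ntrees_avoiderSS n; have := ntrees_avoiderSS n.+1; have := SS n; lia.
Qed.

End AvoiderCount.

Definition A176677 (n : nat) : nat := if n is m.+1 then ntrees avoider m else 1.

Lemma A176677_rec m :
  0 < m -> A176677 m.+1 + 1 = \sum_(p < m.+1) A176677 p * A176677 (m - p).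
Proof.
case: m => [|[|n]] // _; first by rewrite !big_ord_recl big_ord0.
rewrite big_ord_recl big_ord_recr /= subnn add0n mul1n muln1.
rewrite [X in _ = _ + (X + _)](_ : _ = conv (ntrees avoider) (ntrees avoider) n).
  by rewrite ntrees_avoider_rec; lia.
by apply: eq_bigr => i _; rewrite /bump add1n subSS (subSn (leq_ord i)).
Qed.

Local Open Scope ring_scope.

Lemma recurrence_unique (a : nat -> int) (c : nat -> nat) :
  a 0%N = 1 -> a 1%N = 1 -> c 0%N = 1%N -> c 1%N = 1%N ->
  (forall m : nat, (1 <= m)%N ->
     a m.+1 = -1 + \sum_(0 <= p < m.+1) a p * a (m - p)%N) ->
  (forall m : nat, (0 < m)%N -> (c m.+1 + 1 = \sum_(p < m.+1) c p * c (m - p))%N) ->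
  forall n, a n = c n.
Proof.
move=> a0 a1 c0 c1 arec crec; elim/ltn_ind => -[|[|m]] IH; rewrite ?a0 ?c0 ?a1 ?c1 //.
rewrite arec // big_mkord (eq_bigr (fun i : 'I_m.+2 => (c i * c (m.+1 - i))%N%:R)).
  by rewrite -natr_sum -crec // natrD addrC addrK natz.
by move=> i _; rewrite !IH ?ltn_ord ?natz // ltnS leq_subr.
Qed.

Theorem lemma23 (a : nat -> int)
  (ha0 : a 0%N = 1) (ha1 : a 1%N = 1)
  (harec : forall m : nat, (1 <= m)%N ->
     a m.+1 = -1 + \sum_(0 <= p < m.+1) a p * a (m - p)%N)
  (x y : bool) (n : nat) :
  exists s : list bt,
    List.NoDup s /\
    (forall T : bt, List.In T s <-> (bt_size T = n /\ avoids T P12435 (e10xy x y))) /\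
    (Posz (List.length s) = a n.+1).
Proof.
exists (filter avoider (trees n)); split; [|split].
- by apply: uniq_NoDup; rewrite filter_uniq // trees_uniq.
- move=> T; rewrite InP mem_filter mem_trees avoids_12435.
  by split=> [/andP[-> /eqP]|[-> ->]]; rewrite ?eqxx.
- have := recurrence_unique ha0 ha1 (erefl _) (erefl _) harec A176677_rec n.+1.
  by rewrite lengthE size_filter.
Qed.
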